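(* Let $A=(V_\exists,V_\forall,E,E_f)$ be a fair game arena, $v\in V$, $s\in\Sigma$ and $t\in\Pi$. If $\mathsf{fair}_\forall(\mathsf{play}_v(s,t))$ holds, then there exists a $\forall$-fair strategy $\overline t\in\Pi^f$ with $\mathsf{play}_v(s,t)=\mathsf{play}_v(s,\overline t)$. Similarly, if $\mathsf{fair}_\exists(\mathsf{play}_v(s,t))$ holds, then there exists an $\exists$-fair strategy $\overline s\in\Sigma^f$ with $\mathsf{play}_v(s,t)=\mathsf{play}_v(\overline s,t)$.
   Context: A fair game arena $A=(V_\exists,V_\forall,E,E_f)$: finite node set $V=V_\exists\cup V_\forall$ (disjoint), right-total moves $E\subseteq V\times V$, fair moves $E_f\subseteq E$. A play is an infinite sequence $\tau=v_0v_1\ldots$ with $(v_j,v_{j+1})\in E$; $\tau_m=(v_0,v_1)(v_1,v_2)\ldots$; $\mathsf{Inf}$ denotes the set of elements occurring infinitely often. For $i\in\{\exists,\forall\}$, $\tau$ is $i$-fair ($\mathsf{fair}_i(\tau)$) if for all $u\in V_i\cap\mathsf{Inf}(\tau)$, every $(u,u')\in E_f$ is in $\mathsf{Inf}(\tau_m)$. A strategy for player $i$ is a function $p:V^*\cdot V_i\to V$ with $p(w\cdot u)\in E(u)$; it admits a play $v_0v_1\ldots$ if $p(v_0\ldots v_j)=v_{j+1}$ whenever $v_j\in V_i$. $\Sigma$ ($\Pi$) is the set of strategies of $\exists$ ($\forall$); $\mathsf{play}_v(s,t)$ is the unique play from $v$ admitted by both $s$ and $t$. A strategy is $i$-fair if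 every play it admits is $i$-fair; $\Sigma^f$ and $\Pi^f$ denote the sets of $\exists$-fair and $\forall$-fair strategies. *)

From Stdlib Require Import List Arith.
Import ListNotations.


(* A fair game arena over a node type V (finite: given by an exhaustive list).
   V_exists = nodes with [own v = true], V_forall = nodes with [own v = false]
   (so the two are disjoint and cover V). *)
Record arena := {
  V : Type;
  V_eq_dec : forall x y : V, {x = y} + {x <> y};
  V_enum : list V;
  V_enum_full : forall v : V, In v V_enum;
  own : V -> bool;
  E : V -> V -> Prop;
  E_total : forall u, exists u', E u u';
  Ef : V -> V -> Prop;
  Ef_sub : forall u u', Ef u u' -> E u u'
}.

Inductive player := Ex | All.

Definition owned (A : arena) (i : player) (u : V A) : Prop :=
  match i with Ex => own A u = true | All => own A u = false end.

Definition is_play (A : arena) (tau : nat -> V A) : Prop :=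
  forall j, E A (tau j) (tau (S j)).

Definition inf_node (A : arena) (tau : nat -> V A) (u : V A) : Prop :=
  forall n, exists j, n <= j /\ tau j = u.

Definition inf_move (A : arena) (tau : nat -> V A) (u u' : V A) : Prop :=
  forall n, exists j, n <= j /\ tau j = u /\ tau (S j) = u'.

Definition fair (A : arena) (i : player) (tau : nat -> V A) : Prop :=
  forall u, owned A i u -> inf_node A tau u ->
  forall u', Ef A u u' -> inf_move A tau u u'.

(* A strategy for player i: maps a history w·u (w the list of earlier nodes,
   in chronological order, u the current node) to a successor of u when
   u is an i-node.  Its values at non-i-nodes are irrelevant. *)
Definition strategy (A : arena) := list (V A) -> V A -> V A.

Definition valid_strategy (A : arena) (i : player) (p : strategy A) : Prop :=
  forall w u, owned A i u -> E A u (p w u).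

Definition prefix (A : arena) (tau : nat -> V A) (j : nat) : list (V A) :=
  map tau (seq 0 j).

Definition admits (A : arena) (i : player) (p : strategy A) (tau : nat -> V A) : Prop :=
  forall j, owned A i (tau j) -> p (prefix A tau j) (tau j) = tau (S j).

Fixpoint play_hist (A : arena) (v : V A) (s t : strategy A) (n : nat)
  : list (V A) * V A :=
  match n with
  | 0 => ([], v)
  | S n' =>
      let '(w, u) := play_hist A v s t n' in
      (w ++ [u], if own A u then s w u else t w u)
  end.

Definition play (A : arena) (v : V A) (s t : strategy A) : nat -> V A :=
  fun n => snd (play_hist A v s t n).

Definition fair_strategy (A : arena) (i : player) (p : strategy A) : Prop :=
  valid_strategy A i p /\
  forall tau, is_play A tau -> admits A i p tau -> fair A i tau.

(* Let tau = play_v(s,t).  The player keeps following his strategy as long as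
   the history is a prefix of tau, and plays round robin once it has left tau:
   at the k-th visit of u he moves to the (k mod |V|)-th node of the enumeration
   of V whenever that node is a successor of u.  The new strategy still admits
   tau, so tau is still its play against the opponent.  A play it admits is
   either tau, fair by hypothesis, or leaves tau, after which round robin takes
   every successor of an infinitely often visited node infinitely often. *)

From Stdlib Require Import List Arith Lia Classical ClassicalEpsilon FunctionalExtensionality.
Import ListNotations.

Section Prefixes.

Variables (A : arena) (tau : nat -> V A).

Lemma prefix_length j : length (prefix A tau j) = j.
Proof. unfold prefix. now rewrite length_map, length_seq. Qed.

Lemma prefix_S j : prefix A tau (S j) = prefix A tau j ++ [tau j].
Proof. unfold prefix. now rewrite seq_S, map_app. Qed.

Lemma nth_prefix j k d : k < j -> nth k (prefix A tau j) d = tau k.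
Proof.
  intros Hk. rewrite nth_indep with (d' := tau 0) by now rewrite prefix_length.
  unfold prefix. now rewrite map_nth, seq_nth.
Qed.

End Prefixes.

Lemma prefix_eq_inv (A : arena) (tau tau' : nat -> V A) j k :
  prefix A tau j = prefix A tau' j -> k < j -> tau k = tau' k.
Proof.
  intros Heq Hk.
  rewrite <- (nth_prefix A tau j k (tau 0) Hk), <- (nth_prefix A tau' j k (tau 0) Hk).
  now rewrite Heq.
Qed.

Section Occurrences.

Variables (A : arena) (tau : nat -> V A) (u : V A).

Definition occurrences (w : list (V A)) : nat := count_occ (V_eq_dec A) w u.

Lemma occurrences_prefix_S j :
  occurrences (prefix A tau (S j)) =
  occurrences (prefix A tau j) + (if V_eq_dec A (tau j) u then 1 else 0).
Proof.
  unfold occurrences. rewrite prefix_S, count_occ_app. simpl.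
  now destruct (V_eq_dec A (tau j) u).
Qed.

Lemma occurrences_prefix_mono j k : j <= k ->
  occurrences (prefix A tau j) <= occurrences (prefix A tau k).
Proof. induction 1; [lia|]. rewrite occurrences_prefix_S. lia. Qed.

Lemma occurrences_prefix_visit j :
  tau j = u -> occurrences (prefix A tau (S j)) = S (occurrences (prefix A tau j)).
Proof.
  intros Hj. rewrite occurrences_prefix_S.
  destruct V_eq_dec; [lia | contradiction].
Qed.

Lemma occurrences_prefix_unbounded :
  inf_node A tau u -> forall K, exists j, K <= occurrences (prefix A tau j).
Proof.
  intros Hinf K. induction K as [|K [j Hj]]; [now exists 0|].
  destruct (Hinf j) as [j' [Hjj' Hu]].
  exists (S j'). rewrite occurrences_prefix_visit by assumption.
  pose proof (occurrences_prefix_mono j j' Hjj'). lia.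
Qed.

Lemma occurrences_prefix_attained K j : K < occurrences (prefix A tau j) ->
  exists k, tau k = u /\ occurrences (prefix A tau k) = K.
Proof.
  induction j as [|j IH]; intros HK; [cbn in HK; lia|].
  destruct (Nat.lt_ge_cases K (occurrences (prefix A tau j))); [now apply IH|].
  rewrite occurrences_prefix_S in HK.
  destruct (V_eq_dec A (tau j) u); [|lia].
  exists j. split; [assumption | lia].
Qed.

Lemma inf_node_occurrence : inf_node A tau u ->
  forall K, exists k, tau k = u /\ occurrences (prefix A tau k) = K.
Proof.
  intros Hinf K.
  destruct (occurrences_prefix_unbounded Hinf (S K)) as [j Hj].
  exact (occurrences_prefix_attained K j Hj).
Qed.

End Occurrences.

Section RoundRobin.

Variable A : arena.

Definition some_move (u : V A) : V A :=
  proj1_sig (constructive_indefinite_description _ (E_total A u)).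

Lemma some_move_E u : E A u (some_move u).
Proof. exact (proj2_sig (constructive_indefinite_description _ (E_total A u))). Qed.

Definition round_robin : strategy A := fun w u =>
  let x := nth (occurrences A u w mod length (V_enum A)) (V_enum A) u in
  if excluded_middle_informative (E A u x) then x else some_move u.

Lemma round_robin_E w u : E A u (round_robin w u).
Proof.
  unfold round_robin. destruct excluded_middle_informative; auto using some_move_E.
Qed.

Lemma round_robin_fair (i : player) (tau : nat -> V A) m :
  (forall j, m <= j -> owned A i (tau j) ->
     tau (S j) = round_robin (prefix A tau j) (tau j)) ->
  fair A i tau.
Proof.
  intros Hrr u Hu Hinf u' Hef n.
  destruct (In_nth (V_enum A) u' u (V_enum_full A u')) as [r [Hr Hnth]].
  set (N := length (V_enum A)) in *.
  set (c := occurrences A u (prefix A tau (max n m))).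
  (* the visit of u numbered r + c N lies after max n m and sends round robin to u' *)
  destruct (inf_node_occurrence A tau u Hinf (r + c * N)) as [j [Hj Hcount]].
  assert (Hjm : max n m <= j).
  { apply Nat.nlt_ge. intros Hlt.
    pose proof (occurrences_prefix_mono A tau u (S j) (max n m) Hlt) as Hmono.
    rewrite occurrences_prefix_visit in Hmono by assumption. fold c in Hmono. nia. }
  exists j. split; [lia|]. split; [assumption|].
  rewrite Hrr; [| lia | now rewrite Hj]. rewrite Hj.
  unfold round_robin. rewrite Hcount, Nat.Div0.mod_add, Nat.mod_small, Hnth by assumption.
  destruct excluded_middle_informative as [|Hne]; [reflexivity|].
  exfalso. exact (Hne (Ef_sub A u u' Hef)).
Qed.

End RoundRobin.

Section FollowOrRoundRobin.

Variables (A : arena) (tau : nat -> V A).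

Definition follow_or_round_robin (p : strategy A) : strategy A := fun w u =>
  if list_eq_dec (V_eq_dec A) (w ++ [u]) (prefix A tau (S (length w)))
  then p w u else round_robin A w u.

Lemma follow_or_round_robin_valid i p :
  valid_strategy A i p -> valid_strategy A i (follow_or_round_robin p).
Proof.
  intros Hp w u Hu. unfold follow_or_round_robin.
  destruct list_eq_dec; auto using round_robin_E.
Qed.

Lemma follow_or_round_robin_admits i p :
  admits A i p tau -> admits A i (follow_or_round_robin p) tau.
Proof.
  intros Hp j Hj. unfold follow_or_round_robin. rewrite prefix_length, <- prefix_S.
  destruct list_eq_dec; [now apply Hp | congruence].
Qed.

Lemma follow_or_round_robin_off_prefix p (tau' : nat -> V A) k j :
  tau' k <> tau k -> k <= j ->
  follow_or_round_robin p (prefix A tau' j) (tau' j) = round_robin A (prefix A tau' j) (tau' j).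
Proof.
  intros Hk Hkj. unfold follow_or_round_robin. rewrite prefix_length, <- prefix_S.
  destruct list_eq_dec as [Heq|]; [|reflexivity].
  exfalso. apply Hk. apply (prefix_eq_inv A tau' tau (S j)); [exact Heq | lia].
Qed.

Lemma follow_or_round_robin_fair i p :
  valid_strategy A i p -> fair A i tau -> fair_strategy A i (follow_or_round_robin p).
Proof.
  intros Hp Hfair. split; [now apply follow_or_round_robin_valid|].
  intros tau' _ Hadm.
  destruct (classic (forall j, tau' j = tau j)) as [Hsame|Hdiff].
  - now replace tau' with tau by (symmetry; now apply functional_extensionality).
  - apply not_all_ex_not in Hdiff as [k Hk].
    apply (round_robin_fair A i tau' k). intros j Hkj Hj.
    rewrite <- (Hadm j Hj). now apply follow_or_round_robin_off_prefix with k.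
Qed.

End FollowOrRoundRobin.

Section Plays.

Variables (A : arena) (v : V A) (s t : strategy A).

Lemma play_hist_prefix n : play_hist A v s t n = (prefix A (play A v s t) n, play A v s t n).
Proof.
  induction n as [|n IH]; [reflexivity|].
  unfold play at 2. simpl. rewrite IH. f_equal. symmetry. apply prefix_S.
Qed.

Lemma play_S j :
  play A v s t (S j) =
  (if own A (play A v s t j) then s else t) (prefix A (play A v s t) j) (play A v s t j).
Proof.
  unfold play at 1. simpl. rewrite play_hist_prefix.
  now destruct (own A (play A v s t j)).
Qed.

Lemma play_admits_Ex : admits A Ex s (play A v s t).
Proof. intros j Hj. simpl in Hj. now rewrite play_S, Hj. Qed.

Lemma play_admits_All : admits A All t (play A v s t).
Proof. intros j Hj. simpl in Hj. now rewrite play_S, Hj. Qed.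

Lemma play_unique (tau : nat -> V A) :
  tau 0 = v -> admits A Ex s tau -> admits A All t tau ->
  forall n, play A v s t n = tau n.
Proof.
  intros H0 Hs Ht.
  enough (Hhist : forall n, play_hist A v s t n = (prefix A tau n, tau n))
    by (intros n; unfold play; now rewrite Hhist).
  induction n as [|n IH]; [now rewrite <- H0|].
  simpl. rewrite IH, prefix_S. f_equal.
  destruct (own A (tau n)) eqn:Hown; [apply Hs | apply Ht]; exact Hown.
Qed.

End Plays.

Theorem lemma1 (A : arena) (v : V A) (s t : strategy A)
  (Hs : valid_strategy A Ex s) (Ht : valid_strategy A All t) :
  (fair A All (play A v s t) ->
     exists tbar, fair_strategy A All tbar /\
       forall n, play A v s t n = play A v s tbar n) /\
  (fair A Ex (play A v s t) ->
     exists sbar, fair_strategy A Ex sbar /\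
       forall n, play A v s t n = play A v sbar t n).
Proof.
  set (tau := play A v s t).
  split; intros Hfair.
  - exists (follow_or_round_robin A tau t).
    split; [now apply follow_or_round_robin_fair|].
    intros n. symmetry. apply play_unique; [reflexivity | apply play_admits_Ex |].
    apply follow_or_round_robin_admits, play_admits_All.
  - exists (follow_or_round_robin A tau s).
    split; [now apply follow_or_round_robin_fair|].
    intros n. symmetry. apply play_unique; [reflexivity | | apply play_admits_All].
    apply follow_or_round_robin_admits, play_admits_Ex.
Qed.
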